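(* For any integers $n>m\ge1$, there is no algorithm for SSP (on instances with $n$ jobs and $m$ machines) that is $1$-consistent and $\frac{n-m+1}{\lceil n/m\rceil}$-robust, even in the case where all jobs have equal processing times. In particular, for $m=n/2$, there is no algorithm that is $1$-consistent and $o(n)$-robust.
   Context: Scheduling with Speed Predictions (SSP). An instance consists of $n$ jobs with processing times $p_1,\dots,p_n\ge 0$ and $m$ machines with true speeds $s_1,\dots,s_m>0$; processing job $j$ on machine $i$ takes time $p_j/s_i$. In the partitioning stage the algorithm receives $\mathbf p$ and predicted speeds $\hat{\mathbf s}\ge 0$ (not $\mathbf s$) and partitions the jobs into $m$ possibly empty bags. In the scheduling stage $\mathbf s$ is revealed and each bag is assigned whole to a machine; the makespan is the maximum over machines $i$ of (total processing time assigned to $i$)$/s_i$. $opt(\mathbf p,\mathbf s)$ is the minimum makespan of assigning individual jobs knowing $\mathbf s$; $alg(\mathbf p,\hat{\mathbf s},\mathbf s)$ is the algorithm's makespan. An algorithm is $c$-consistent if $alg(\mathbf p,\mathbf s,\mathbf s)\le c\cdot opt(\mathbf p,\mathbf s)$ for all $\mathbf p,\mathbf s$, and $\beta$-robust if $alg(\mathbf p,\hat{\mathbf s},\mathbf s)\le \beta\cdot opt(\mathbf p,\mathbf s)$ for all $\mathbf p,\hat{\mathbf s},\mathbf s$. *)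

From HB Require Import structures.
From mathcomp Require Import all_boot all_order all_algebra.
Set Implicit Arguments. Unset Strict Implicit. Unset Printing Implicit Defensive.
Import Order.TTheory GRing.Theory Num.Theory.
Local Open Scope ring_scope.

Section SSP.
Variables (R : realFieldType) (n m : nat).

Definition makespan (p : 'I_n -> R) (s : 'I_m -> R) (a : 'I_n -> 'I_m) : R :=
  \big[Order.max/0]_(i < m) ((\sum_(j < n | a j == i) p j) / s i).

(* opt(p,s): minimum makespan over all job-to-machine assignments
   (0 if there is no assignment at all, i.e. m = 0 and n > 0). *)
Definition opt (p : 'I_n -> R) (s : 'I_m -> R) : R :=
  oapp (fun a0 : {ffun 'I_n -> 'I_m} =>
          \big[Order.min/makespan p s a0]_(a : {ffun 'I_n -> 'I_m}) makespan p s a)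
       0 [pick a : {ffun 'I_n -> 'I_m}].

(* An SSP algorithm: the partitioning stage sees only p and the predicted
   speeds shat, and maps each job to one of m bags; the scheduling stage
   additionally sees the true speeds s and maps each bag (whole) to a machine. *)
Record algorithm := Algorithm {
  partition : ('I_n -> R) -> ('I_m -> R) -> 'I_n -> 'I_m;
  assign    : ('I_n -> R) -> ('I_m -> R) -> ('I_m -> R) -> 'I_m -> 'I_m
}.

Definition alg (A : algorithm) (p : 'I_n -> R) (shat s : 'I_m -> R) : R :=
  makespan p s (fun j => assign A p shat s (partition A p shat j)).

(* Admissible processing-time vectors are restricted to a class P
   (P = all nonnegative vectors gives the general definitions). *)
Definition consistent_on (P : ('I_n -> R) -> Prop) (c : R) (A : algorithm) :=
  forall (p : 'I_n -> R) (s : 'I_m -> R),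
    P p -> (forall i, 0 < s i) -> alg A p s s <= c * opt p s.

Definition robust_on (P : ('I_n -> R) -> Prop) (beta : R) (A : algorithm) :=
  forall (p : 'I_n -> R) (shat s : 'I_m -> R),
    P p -> (forall i, 0 <= shat i) -> (forall i, 0 < s i) ->
    alg A p shat s <= beta * opt p s.

Definition equal_times (p : 'I_n -> R) : Prop :=
  exists c : R, 0 <= c /\ forall j, p j = c.

End SSP.

Definition ceil_div (a b : nat) : nat := (a %/ b + ~~ (b %| a))%N.

From Pilot Require Import Defs.
From HB Require Import structures.
From mathcomp Require Import all_boot all_order all_algebra.
From mathcomp Require Import zify.
Import Order.TTheory GRing.Theory Num.Theory.
Local Open Scope ring_scope.

(** Take [n] unit jobs and predicted speeds [n - m + 1] for the last machine
    and [1] for the others.  When the prediction is correct the optimum is [1]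
    and it is attained only by putting [n - m + 1] jobs on the fast machine and
    one job on each slow machine; a 1-consistent algorithm must therefore
    produce bags of which at most one goes to the fast machine, so one bag
    holds [n - m + 1] jobs.  If the true speeds are all [1], that bag alone
    gives makespan [n - m + 1], whereas the optimum is [ceil (n / m)]. *)

Section Makespan.
Context {R : realFieldType} {n m : nat}.
Implicit Types (p : 'I_n -> R) (s : 'I_m -> R) (a : 'I_n -> 'I_m).

Lemma load_le_makespan p s a i :
  (\sum_(j < n | a j == i) p j) / s i <= makespan p s a.
Proof. exact: le_bigmax. Qed.

Lemma makespan_le p s a c : 0 <= c ->
  (forall i, (\sum_(j < n | a j == i) p j) / s i <= c) -> makespan p s a <= c.
Proof. by move=> c_ge0 load_le; apply: bigmax_le. Qed.

Lemma opt_le_makespan p s a : opt p s <= makespan p s a.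
Proof.
have -> : makespan p s a = makespan p s [ffun j => a j].
  by apply: eq_bigr => i _; congr (_ / _); apply: eq_bigl => j; rewrite ffunE.
rewrite /opt; case: pickP => [a0 _ | /(_ [ffun j => a j]) //].
exact: bigmin_le.
Qed.

Lemma opt_ge0 p s : 0 <= opt p s.
Proof.
rewrite /opt; case: pickP => [a0 _ | //] /=.
by apply: le_bigmin => [|a _]; apply: bigmax_ge_id.
Qed.

Lemma sum_unit_load a i :
  \sum_(j < n | a j == i) (1 : R) = #|[set j | a j == i]|%:R.
Proof. by rewrite sumr_const cardsE. Qed.

End Makespan.

Lemma card_ord_window n lo c : (#|[set j : 'I_n | lo <= j < lo + c]| <= c)%N.
Proof.
case: c => [|c].
  by rewrite leqn0 cards_eq0; apply/eqP/setP => j; rewrite !inE; lia.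
rewrite -[X in (_ <= X)%N]card_ord.
apply: (leq_card_in (fun j : 'I_n => inord (j - lo) : 'I_c.+1)) => j1 j2.
rewrite !inE => /andP[le1 lt1] /andP[le2 lt2] /(congr1 val).
by rewrite /= !inordK; [move=> eq12; apply: val_inj => /=; lia | lia | lia].
Qed.

Lemma exists_heavy_bag {J B I : finType} (g : J -> B) (f : B -> I) (i0 : I) :
  (#|B| <= #|I| <= #|J|)%N ->
  (#|[set j | f (g j) == i0]| <= #|J| - #|I| + 1)%N ->
  (forall i, i != i0 -> #|[set j | f (g j) == i]| <= 1)%N ->
  exists b, (#|J| - #|I| + 1 <= #|[set j | g j == b]|)%N.
Proof.
move=> /andP[leBI leIJ] + le_load1.
(* The loads are tight: the jobs off [i0] fill every other machine with one
   job each, through distinct bags, so at most one bag is sent to [i0]. *)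
set J0 := [set j | f (g j) == i0]; set B0 := f @^-1: [set i0] => le_load0.
have I_gt0 : (0 < #|I|)%N by apply/card_gt0P; exists i0.
have inj_fg : {in ~: J0 &, injective (f \o g)}.
  move=> j1 j2; rewrite !inE => fgj1 _ /= eq12.
  by apply: (card_le1_eqP (le_load1 _ fgj1)); rewrite inE //= -eq12.
have le_J0C : (#|~: J0| <= #|I| - 1)%N.
  rewrite -(card_in_imset inj_fg) subn1 -(cardsC1 i0).
  by apply/subset_leq_card/subsetP => i /imsetP[j]; rewrite !inE => fgj ->.
have cardJ0 := cardsC J0.
have le_B0 : (#|B0| <= 1)%N.
  have inj_g : {in ~: J0 &, injective g}.
    by move=> j1 j2 j1J0 j2J0 eq12; apply: inj_fg => //=; rewrite eq12.
  have : (#|g @: ~: J0| <= #|~: B0|)%N.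
    by apply/subset_leq_card/subsetP => b /imsetP[j]; rewrite !inE => gj ->.
  have := cardsC B0; rewrite (card_in_imset inj_g); lia.
have /card_gt0P[j0 j0J0] : (0 < #|J0|)%N by lia.
exists (g j0); apply: leq_trans (subset_leq_card (_ : J0 \subset _)).
  by lia.
apply/subsetP => j jJ0; rewrite inE; apply/eqP.
by apply: (card_le1_eqP le_B0); rewrite inE; move: jJ0 j0J0; rewrite !inE.
Qed.

Lemma leq_ceil_div a b : (0 < b)%N -> (a <= ceil_div a b * b)%N.
Proof.
rewrite /ceil_div; case: (boolP (b %| a)%N) => [dvd_ba | _] b_gt0 /=.
  by rewrite addn0 divnK.
by rewrite addn1 ltnW // ltn_ceil.
Qed.

Lemma ceil_div_gt0 a b : (0 < a)%N -> (0 < b)%N -> (0 < ceil_div a b)%N.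
Proof. by move=> a_gt0 /(leq_ceil_div a); case: ceil_div => //; lia. Qed.

Section UnitJobs.
Context {R : realFieldType} {n m : nat}.
Hypothesis ltmn : (m < n)%N.

Definition unit_jobs : 'I_n -> R := fun=> 1.
Definition unit_speeds : 'I_m.+1 -> R := fun=> 1.
Definition fast_last (k : nat) : 'I_m.+1 -> R :=
  fun i => if i == ord_max then k%:R else 1.

Lemma equal_times_unit : equal_times unit_jobs.
Proof. by exists 1. Qed.

Lemma fast_last_gt0 i : 0 < fast_last (n - m) i.
Proof. by rewrite /fast_last; case: ifP; rewrite ?ltr0n ?subn_gt0. Qed.

Lemma opt_fast_last_le1 : opt unit_jobs (fast_last (n - m)) <= 1.
Proof.
apply: le_trans (opt_le_makespan _ _ (fun j => inord (minn j m))) _.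
apply: makespan_le => // i; rewrite sum_unit_load /fast_last.
case: eqP => [-> | ne_i_max].
  rewrite ler_pdivrMr ?ltr0n ?subn_gt0 // mul1r ler_nat.
  apply: leq_trans (card_ord_window n m (n - m)).
  apply/subset_leq_card/subsetP => j; have := ltn_ord j.
  by rewrite !inE => lt_jn /eqP/(congr1 val) /=; rewrite inordK; lia.
have lt_im : (i < m)%N.
  have := ltn_ord i; rewrite ltnS leq_eqVlt => /orP[/eqP eq_im|] //.
  by case: ne_i_max; apply: val_inj.
rewrite divr1 lern1; apply: leq_trans (card_ord_window n i 1).
apply/subset_leq_card/subsetP => j; have := ltn_ord j.
by rewrite !inE => lt_jn /eqP/(congr1 val) /=; rewrite inordK; lia.
Qed.

Lemma opt_unit_speeds_le : opt unit_jobs unit_speeds <= (ceil_div n m.+1)%:R.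
Proof.
set c := ceil_div n m.+1.
have le_n_cm : (n <= c * m.+1)%N by apply: leq_ceil_div.
have c_gt0 : (0 < c)%N by apply: ceil_div_gt0 => //; apply: leq_ltn_trans ltmn.
apply: le_trans (opt_le_makespan _ _ (fun j => inord (j %/ c))) _.
apply: makespan_le => // i; rewrite sum_unit_load divr1 ler_nat.
apply: leq_trans (card_ord_window n (i * c) c).
apply/subset_leq_card/subsetP => j; rewrite !inE => /eqP/(congr1 val).
rewrite /= inordK => [<-|].
  by rewrite leq_divM /= -mulSnr ltn_ceil.
by rewrite ltn_divLR // mulnC (leq_trans _ le_n_cm).
Qed.

End UnitJobs.

Section Algorithm.
Context {R : realFieldType} {n m : nat} (A : algorithm R n m.+1).

Lemma consistent_heavy_bag :
  (m < n)%N -> consistent_on (@equal_times R n) 1 A ->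
  exists b, (n - m <=
    #|[set j | Defs.partition A unit_jobs (fast_last (n - m)) j == b]|)%N.
Proof.
move=> ltmn consA; set s := fast_last _.
have alg_le1 : alg A unit_jobs s s <= 1.
  apply: le_trans (consA _ _ equal_times_unit (fast_last_gt0 ltmn)) _.
  by rewrite mul1r opt_fast_last_le1.
have load_le i := le_trans (load_le_makespan _ s _ i) alg_le1.
have := exists_heavy_bag (Defs.partition A unit_jobs s)
  (assign A unit_jobs s s) ord_max.
rewrite !card_ord addn1 subnSK //; apply; first by rewrite ltnSn.
  move: (load_le ord_max); rewrite sum_unit_load /s /fast_last eqxx.
  by rewrite ler_pdivrMr ?ltr0n ?subn_gt0 // mul1r ler_nat.
move=> i /negbTE ne_i_max; move: (load_le i).
by rewrite sum_unit_load /s /fast_last ne_i_max divr1 lern1.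
Qed.

Lemma card_bag_le_alg shat b :
  #|[set j | Defs.partition A unit_jobs shat j == b]|%:R
    <= alg A unit_jobs shat unit_speeds.
Proof.
apply: le_trans
  (load_le_makespan _ _ _ (assign A unit_jobs shat unit_speeds b)).
rewrite sum_unit_load divr1 ler_nat; apply/subset_leq_card/subsetP => j.
by rewrite !inE => /eqP ->.
Qed.

End Algorithm.

Theorem proposition1 (R : realFieldType) (n m : nat) :
  (1 <= m)%N -> (m < n)%N ->
  forall (A : algorithm R n m) (beta : R),
    consistent_on (@equal_times R n) 1 A ->
    robust_on (@equal_times R n) beta A ->
    (n - m + 1)%:R / (ceil_div n m)%:R <= beta.
Proof.
case: m => [//|m] _ /ltnW ltmn A beta consA robA.
have [b heavy] := consistent_heavy_bag A ltmn consA.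
have k_le_alg : (n - m)%:R <= alg A unit_jobs (fast_last (n - m)) unit_speeds.
  by apply: le_trans (card_bag_le_alg A _ b); rewrite ler_nat.
have k_le_beta_opt := le_trans k_le_alg (robA _ _ _ equal_times_unit
  (fun i => ltW (fast_last_gt0 ltmn i)) (fun=> ltr01)).
have opt_ge0 := opt_ge0 (@unit_jobs R n) (@unit_speeds R m).
have beta_ge0 : 0 <= beta.
  rewrite leNgt; apply/negP => /ltW beta_le0.
  have := le_trans k_le_beta_opt (mulr_le0_ge0 beta_le0 opt_ge0).
  by rewrite lern0 subn_eq0 leqNgt ltmn.
rewrite addn1 subnSK // ler_pdivrMr ?ltr0n ?ceil_div_gt0 //;
  last exact: leq_ltn_trans ltmn.
exact: le_trans k_le_beta_opt (ler_wpM2l beta_ge0 (opt_unit_speeds_le ltmn)).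
Qed.
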